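(* Let $H_X\in\mathbb{F}_2^{m_X\times n}$ and $H_Z\in\mathbb{F}_2^{m_Z\times n}$, and let $k=n-\mathrm{rank}(H_X)-\mathrm{rank}(H_Z)$. Let $P\ge1$ and let $\hat H_X\in\mathbb{F}_2^{Pm_X\times Pn}$, $\hat H_Z\in\mathbb{F}_2^{Pm_Z\times Pn}$ be obtained by replacing each nonzero entry of $H_X$ and $H_Z$ by some $P\times P$ permutation matrix and each zero entry by the $P\times P$ zero matrix, and assume $\hat H_X\hat H_Z^{\mathsf T}=0$ over $\mathbb{F}_2$. Let $\hat k=Pn-\mathrm{rank}(\hat H_X)-\mathrm{rank}(\hat H_Z)$. Then \[ \hat k\ge k+(P-1)(n-m_X-m_Z). \] In particular, if $n=m_X+m_Z$, then $\hat k\ge k$.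
   Context: All ranks are over $\mathbb{F}_2$. The permutation matrices used for different entries may differ. *)

From HB Require Import structures.
From mathcomp Require Import all_boot all_order all_algebra all_fingroup.
Set Implicit Arguments. Unset Strict Implicit. Unset Printing Implicit Defensive.
Import GRing.Theory.
Local Open Scope ring_scope.

(* The result is the block matrix
   of size (m*P) x (n*P) (dimensions written as \sum_(i < m) P etc.). *)
Definition lift_mx (m n P : nat) (H : 'M['F_2]_(m, n))
  (s : 'I_m -> 'I_n -> 'S_P) :
  'M['F_2]_(\sum_(i < m) P, \sum_(j < n) P) :=
  \mxblock_(i < m, j < n)
     (if H i j != 0 then (perm_mx (s i j) : 'M['F_2]_(P, P)) else 0).

From HB Require Import structures.
From mathcomp Require Import all_boot all_order all_algebra all_fingroup.
From mathcomp Require Import zify.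
Import GRing.Theory.
Local Open Scope ring_scope.

(* Summing each block of P coordinates maps the lifted code onto the base code:
   if B sums blocks, then B * lift(H) = H * B.  Since B has full row rank m, it
   loses at most m*P - m dimensions, so rank(lift H) <= rank H + (P - 1) m.
   Applying this to both check matrices gives the bound on khat. *)

Definition blocksum_mx (R : pzRingType) (m P : nat) :
  'M[R]_(m, \sum_(i < m) P) :=
  \mxrow_(i < m) (delta_mx i 0 *m (const_mx 1 : 'M_(1, P))).

Lemma mul_const_perm_mx {R : pzRingType} {k P} (a : R) (s : 'S_P) :
  (const_mx a : 'M_(k, P)) *m perm_mx s = const_mx a.
Proof. by rewrite -[s]invgK -col_permE; apply/matrixP => i j; rewrite !mxE. Qed.

Lemma F2_if_neq0 (x : 'F_2) {m n} (D : 'M['F_2]_(m, n)) :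
  (if x != 0 then D else 0) = x *: D.
Proof.
case: x => [[|[|k]] lt_x2] //=.
- by rewrite (_ : Ordinal lt_x2 = 0) ?scale0r //; apply/val_inj.
- by rewrite (_ : Ordinal lt_x2 = 1) ?scale1r //; apply/val_inj.
Qed.

Lemma blocksum_lift_mx {m n P} (H : 'M['F_2]_(m, n)) (s : 'I_m -> 'I_n -> 'S_P) :
  blocksum_mx _ m P *m lift_mx H s = H *m blocksum_mx _ n P.
Proof.
rewrite mul_mxrow_mxblock mul_mxrow; apply: eq_mxrow => j.
under eq_bigr do rewrite F2_if_neq0 -scalemxAr -mulmxA mul_const_perm_mx scalemxAl.
rewrite -mulmx_suml mulmxA -colE; congr (_ *m _).
apply/matrixP => a b; rewrite summxE (bigD1 a) //= big1 ?addr0.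
  by rewrite !mxE ord1 !eqxx mulr1.
by move=> i /negPf ia; rewrite !mxE eq_sym ia mulr0.
Qed.

Lemma blocksum_mx_free {F : fieldType} m P :
  (0 < P)%N -> row_free (blocksum_mx F m P).
Proof.
move=> P_gt0; pose k : 'I_P := Ordinal P_gt0.
apply/row_freeP; exists (\mxcol_(i < m) delta_mx k i).
have ones_delta i : (const_mx 1 : 'M_(1, P)) *m delta_mx k i = delta_mx 0 i.
  rewrite -(mul_delta_mx (0 : 'I_1) k) mulmxA -colE.
  by rewrite (_ : col k _ = 1%:M) ?mul1mx //; apply/matrixP => a b; rewrite !mxE !ord1.
rewrite mul_mxrow_mxcol.
under eq_bigr => i _ do rewrite -mulmxA ones_delta mul_delta_mx.
apply/matrixP => a b; rewrite summxE (bigD1 a) //= big1 ?addr0.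
  by rewrite !mxE eqxx /= eq_sym.
by move=> i /negPf ia; rewrite !mxE eq_sym ia.
Qed.

Lemma mxrank_le_mul_free {F : fieldType} {r p q} (L : 'M[F]_(r, p)) (A : 'M_(p, q)) :
  row_free L -> (\rank A <= \rank (L *m A) + (p - r))%N.
Proof.
move=> /eqP rkL; have := mxrank_mul_min L A; have := rank_leq_col L.
by rewrite rkL; lia.
Qed.

Lemma mxrank_lift_mx {m n P} (H : 'M['F_2]_(m, n)) (s : 'I_m -> 'I_n -> 'S_P) :
  (0 < P)%N -> (\rank (lift_mx H s) <= \rank H + (m * P - m))%N.
Proof.
move=> P_gt0; have := mxrank_le_mul_free _ (lift_mx H s) (blocksum_mx_free m P P_gt0).
move=> /leq_trans; apply; apply: leq_add.
  by rewrite blocksum_lift_mx mxrankM_maxl.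
by rewrite sum_nat_const card_ord mulnC.
Qed.

Theorem mainTheorem5 (mX mZ n P : nat) (HX : 'M['F_2]_(mX, n))
  (HZ : 'M['F_2]_(mZ, n)) (sX : 'I_mX -> 'I_n -> 'S_P)
  (sZ : 'I_mZ -> 'I_n -> 'S_P) :
  (1 <= P)%N ->
  lift_mx HX sX *m (lift_mx HZ sZ)^T = 0 ->
  let k : int := n%:Z - (\rank HX)%:Z - (\rank HZ)%:Z in
  let khat : int := (P * n)%:Z - (\rank (lift_mx HX sX))%:Z
                                - (\rank (lift_mx HZ sZ))%:Z in
  k + (P%:Z - 1) * (n%:Z - mX%:Z - mZ%:Z) <= khat /\
  (n = (mX + mZ)%N -> k <= khat).
Proof.
move=> P_gt0 _ k khat.
have liftX := mxrank_lift_mx HX sX P_gt0.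
have liftZ := mxrank_lift_mx HZ sZ P_gt0.
move: liftX liftZ; rewrite /k /khat.
move: (\rank (lift_mx HX sX)) (\rank (lift_mx HZ sZ)) (\rank HX) (\rank HZ).
by move=> *; split=> [|n_eq]; nia.
Qed.
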